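(* Let $L$ be a Lie algebra over $\Phi$ and let $I$ be an ideal of $L$ which is strongly non-degenerate as a Lie algebra. Then: (i) $\mathrm{Ann}_L(I)=\mathrm{QAnn}_L(I)$; (ii) if $\mathrm{Ann}_L(I)=0$, then $L$ is strongly non-degenerate.
   Context: $\Phi$ is a unital commutative ring in which $2$ and $3$ are invertible; all algebras are $\Phi$-modules. An element $x$ of a Lie algebra $M$ is an absolute zero divisor if $[x,[x,M]]=0$; $M$ is strongly non-degenerate if it has no non-zero absolute zero divisors. For subsets $X,Y$ of a Lie algebra, $\mathrm{Ann}_X(Y)=\{x\in X: [x,Y]=0\}$ and $\mathrm{QAnn}_X(Y)=\{x\in X: [x,[x,Y]]=0\}$. *)

From HB Require Import structures.
From mathcomp Require Import all_boot all_order all_algebra.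
Set Implicit Arguments. Unset Strict Implicit. Unset Printing Implicit Defensive.
Import GRing.Theory.
Local Open Scope ring_scope.

Definition is_lie_bracket (R : comPzRingType) (L : lmodType R)
    (br : L -> L -> L) : Prop :=
  [/\ (forall (a : R) (x y z : L), br (a *: x + y) z = a *: br x z + br y z),
      (forall (a : R) (x y z : L), br x (a *: y + z) = a *: br x y + br x z),
      (forall x : L, br x x = 0) &
      (forall x y z : L, br x (br y z) + br y (br z x) + br z (br x y) = 0)].

Definition is_lie_ideal (R : comPzRingType) (L : lmodType R)
    (br : L -> L -> L) (I : L -> Prop) : Prop :=
  [/\ I 0,
      (forall x y, I x -> I y -> I (x + y)),
      (forall (a : R) x, I x -> I (a *: x)) &
      (forall x y, I y -> I (br x y))].

Definition Ann (R : comPzRingType) (L : lmodType R) (br : L -> L -> L)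
    (X Y : L -> Prop) : L -> Prop :=
  fun x => X x /\ (forall y, Y y -> br x y = 0).
Definition QAnn (R : comPzRingType) (L : lmodType R) (br : L -> L -> L)
    (X Y : L -> Prop) : L -> Prop :=
  fun x => X x /\ (forall y, Y y -> br x (br x y) = 0).

(* The Lie algebra S (a subalgebra of (L, br), with the inherited bracket;
   e.g. an ideal, or the whole of L) is strongly non-degenerate: its only
   absolute zero divisor is 0. *)
Definition strongly_nondegenerate (R : comPzRingType) (L : lmodType R)
    (br : L -> L -> L) (S : L -> Prop) : Prop :=
  forall x, S x -> (forall y, S y -> br x (br x y) = 0) -> x = 0.

From HB Require Import structures.
From mathcomp Require Import all_boot all_order all_algebra.
Import GRing.Theory.
Local Open Scope ring_scope.
Set Implicit Arguments. Unset Strict Implicit.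

(* Fix x in L with [x,[x,I]] = 0.  Expanding [x,[x,[a,b]]] = 0 shows that
   [[x,a],[x,b]] = 0 for a, b in I (using 1/2), and from this the map
     T(a,b,c) = [[x,a],[b,[x,c]]]          (trix below)
   is trilinear and totally symmetric on I, with ad_[x,a] ad_[x,c] b = -T(a,c,b).
   For y in I and u = [x,y], we have ad_u^3 = 0 on I, and n = [u,[u,y]] lies
   in [x,I]; a Kostrikin-type computation then gives ad_n^2 = 0 on I, so n = 0
   by strong non-degeneracy, i.e. T(y,y,y) = 0.  Polarizing this cubic form
   (using 1/6) yields T(z,z,w) = 0, i.e. [x,z] is an absolute zero divisor of I
   for every z in I, hence [x,I] = 0.  Part (ii) follows at once: an absolute
   zero divisor of L lies in QAnn_L(I) = Ann_L(I) = 0. *)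

Lemma natmul_eq0_unit (R : comPzRingType) (V : lmodType R) (k : nat) (v : V) :
  (exists t : R, k%:R * t = 1) -> v *+ k = 0 -> v = 0.
Proof.
case=> t Ht Hv.
by rewrite -[v]scale1r -Ht mulrC -scalerA scaler_nat Hv scaler0.
Qed.

Lemma natr_unitM (R : comPzRingType) (k l : nat) :
  (exists t : R, k%:R * t = 1) -> (exists t : R, l%:R * t = 1) ->
  exists t : R, (k * l)%:R * t = 1.
Proof.
by case=> t Ht [t' Ht']; exists (t * t'); rewrite natrM mulrACA Ht Ht' mulr1.
Qed.

Lemma additive_0 (V W : zmodType) (g : V -> W) :
  (forall a b, g (a + b) = g a + g b) -> g 0 = 0.
Proof. by move=> gD; apply: (@addrI _ (g 0)); rewrite -gD !addr0. Qed.

Lemma additive_opp (V W : zmodType) (g : V -> W) :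
  (forall a b, g (a + b) = g a + g b) -> forall a, g (- a) = - g a.
Proof.
by move=> gD a; apply/eqP; rewrite -addr_eq0 -gD addNr (additive_0 gD).
Qed.

Section Polarization.
Variables (V W : zmodType) (S : V -> Prop) (f : V -> V -> V -> W).
Hypotheses (SD : forall a b, S a -> S b -> S (a + b))
  (SN : forall a, S a -> S (- a)).
Hypotheses (fD1 : forall a a' b c, f (a + a') b c = f a b c + f a' b c)
  (fD2 : forall a b b' c, f a (b + b') c = f a b c + f a b' c)
  (fD3 : forall a b c c', f a b (c + c') = f a b c + f a b c').
Hypotheses (f12 : forall a b c, S a -> S b -> S c -> f a b c = f b a c)
  (f13 : forall a b c, S a -> S b -> S c -> f a b c = f c b a).

Lemma cube_sum z w : S z -> S w ->
  f (z + w) (z + w) (z + w)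
  = f z z z + (f z z w + f z w w) *+ 3 + f w w w.
Proof.
move=> Sz Sw; rewrite !fD1 !fD2 !fD3.
rewrite [f z w z]f12 // [f w z z]f13 // [f w z w]f12 // [f w w z]f13 //.
by rewrite !mulrS mulr0n addr0 !addrA (ACl (1*2*4*3*6*5*7*8)).
Qed.

Lemma polarize_cube (six : forall v : W, v *+ 6 = 0 -> v = 0)
    (f_cube : forall y, S y -> f y y y = 0) z w :
  S z -> S w -> f z z w = 0.
Proof.
move=> Sz Sw; apply: six.
have fN3 : forall a b c, f a b (- c) = - f a b c.
  by move=> a b; apply: additive_opp (fD3 a b).
have fN2 : forall a b c, f a (- b) c = - f a b c.
  by move=> a b c; apply: (additive_opp (fun b => fD2 a b ^~ c)).
have plus : (f z z w + f z w w) *+ 3 = 0.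
  have /esym := cube_sum Sz Sw.
  by rewrite (f_cube _ (SD Sz Sw)) !f_cube // add0r addr0.
have minus : (- f z z w + f z w w) *+ 3 = 0.
  have /esym := cube_sum Sz (SN Sw).
  rewrite (f_cube _ (SD Sz (SN Sw))) (f_cube _ (SN Sw)) f_cube // add0r addr0.
  by rewrite fN3 !fN2 fN3 opprK.
have -> : f z z w *+ 6 = (f z z w + f z w w) *+ 3 - (- f z z w + f z w w) *+ 3.
  by rewrite -mulrnBl opprD opprK addrACA subrr addr0 -mulr2n -mulrnA.
by rewrite plus minus subrr.
Qed.

End Polarization.

Section LieAlgebra.
Variables (R : comPzRingType) (L : lmodType R) (br : L -> L -> L).
Hypothesis Hb : is_lie_bracket br.
Local Notation "[ a , b ]" := (br a b).

Lemma brDl x y z : [x + y, z] = [x, z] + [y, z].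
Proof. by case: Hb => brl _ _ _; have := brl 1 x y z; rewrite !scale1r. Qed.

Lemma brDr x y z : [x, y + z] = [x, y] + [x, z].
Proof. by case: Hb => _ brr _ _; have := brr 1 x y z; rewrite !scale1r. Qed.

Lemma br0l z : [0, z] = 0.
Proof. exact: (additive_0 (fun a b => brDl a b z)). Qed.

Lemma br0r z : [z, 0] = 0.
Proof. exact: (additive_0 (brDr z)). Qed.

Lemma brNr x z : [z, - x] = - [z, x].
Proof. exact: (additive_opp (brDr z)). Qed.

Lemma brBr x y z : [z, x - y] = [z, x] - [z, y].
Proof. by rewrite brDr brNr. Qed.

Lemma brMnr x v k : [x, v *+ k] = [x, v] *+ k.
Proof. by elim: k => [|k IHk]; rewrite ?br0r // !mulrS brDr IHk. Qed.

(* Anticommutativity, from the alternating law applied to x + y. *)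
Lemma brC x y : [x, y] = - [y, x].
Proof.
case: Hb => _ _ alt _; apply/eqP; rewrite -addr_eq0.
by have := alt (x + y); rewrite brDl !brDr !alt add0r addr0 addrC => ->.
Qed.

Lemma br_derivation x a b : [x, [a, b]] = [[x, a], b] + [a, [x, b]].
Proof.
case: Hb => _ _ _ jacobi; have /eqP := jacobi x a b.
rewrite (brC b x) brNr (brC b [x, a]) -addrA -opprD addr_eq0 opprK => /eqP ->.
by rewrite addrC.
Qed.

Lemma br_commutator p q c : [[p, q], c] = [p, [q, c]] - [q, [p, c]].
Proof. by rewrite br_derivation addrK. Qed.

Section StronglyNondegenerateIdeal.
Variable I : L -> Prop.
Hypotheses (HI : is_lie_ideal br I) (HN : strongly_nondegenerate br I).

Lemma ideal_add a b : I a -> I b -> I (a + b).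
Proof. by case: HI => _ Iadd _ _; apply: Iadd. Qed.

Lemma ideal_opp a : I a -> I (- a).
Proof. by case: HI => _ _ Iscale _ Ia; rewrite -scaleN1r; apply: Iscale. Qed.

Lemma ideal_br a b : I b -> I [a, b].
Proof. by case: HI => _ _ _ Ibr; apply: Ibr. Qed.

Lemma ideal_brl a b : I a -> I [a, b].
Proof. by move=> Ia; rewrite brC; apply/ideal_opp/ideal_br. Qed.

Hypothesis two : exists t : R, 2%:R * t = 1.
Variable x : L.
Hypothesis Hx : forall w, I w -> [x, [x, w]] = 0.

(* [x, I] is an abelian subalgebra: expand 0 = ad_x^2 [a, b] by Leibniz. *)
Lemma ad_x_images_commute a b : I a -> I b -> [[x, a], [x, b]] = 0.
Proof.
move=> Ia Ib; apply: (natmul_eq0_unit two); rewrite mulr2n.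
have := Hx (ideal_brl b Ia).
rewrite (br_derivation x a b) brDr (br_derivation x [x, a]) (br_derivation x a).
by rewrite Hx // Hx // br0l br0r add0r addr0.
Qed.

Definition trix a b c := [[x, a], [b, [x, c]]].

Lemma trixD1 a a' b c : trix (a + a') b c = trix a b c + trix a' b c.
Proof. by rewrite /trix brDr brDl. Qed.

Lemma trixD2 a b b' c : trix a (b + b') c = trix a b c + trix a b' c.
Proof. by rewrite /trix brDl brDr. Qed.

Lemma trixD3 a b c c' : trix a b (c + c') = trix a b c + trix a b c'.
Proof. by rewrite /trix !brDr. Qed.

Lemma ad_xa_ad_xc a b c : I a -> I b -> [[x, a], [[x, c], b]] = - trix a c b.
Proof.
move=> Ia Ib; rewrite (br_commutator x c b) brBr ad_x_images_commute ?sub0r //.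
exact: ideal_br.
Qed.

Lemma trix_inner a b c : I b -> I c -> trix a b c = [x, [a, [b, [x, c]]]].
Proof.
move=> Ib Ic; rewrite (br_derivation x a) (br_derivation x b).
by rewrite ad_x_images_commute // Hx // br0r add0r br0r addr0.
Qed.

Lemma trix_sym12 a b c : I a -> I b -> I c -> trix a b c = trix b a c.
Proof.
move=> Ia Ib Ic; rewrite !trix_inner // (br_derivation a b) brDr.
rewrite (br_derivation x [a, b]).
by rewrite ad_x_images_commute ?Hx ?br0r ?add0r //; apply: ideal_brl.
Qed.

Lemma trix_sym13 a b c : I a -> I c -> trix a b c = trix c b a.
Proof.
move=> Ia Ic; rewrite /trix br_derivation ad_x_images_commute // br0r addr0.
by rewrite brC (brC b) brNr.
Qed.

Lemma ad_xa_commute a c w : I a -> I c ->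
  [[x, a], [[x, c], w]] = [[x, c], [[x, a], w]].
Proof. by move=> Ia Ic; rewrite br_derivation ad_x_images_commute // br0l add0r. Qed.

Section CubicForm.
Variable y : L.
Hypothesis Iy : I y.
Local Notation u := [x, y].
Local Notation n := [u, [u, y]].

Lemma adu_sq w : I w -> [u, [u, w]] = - trix y y w.
Proof. by move=> Iw; apply: ad_xa_ad_xc. Qed.

Lemma adu_cube w : I w -> [u, [u, [u, w]]] = 0.
Proof.
move=> Iw; rewrite adu_sq ?trix_inner //; try exact: ideal_br.
rewrite (br_derivation x u w) Hx // br0l add0r ad_x_images_commute //.
by rewrite !br0r oppr0.
Qed.

(* n lies in [x, I]; hence ad n commutes with ad u. *)
Lemma n_in_xI : n = [x, - [y, [y, u]]].
Proof. by rewrite adu_sq // trix_inner // brNr. Qed.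

Lemma adn_adu_commute w : [n, [u, w]] = [u, [n, w]].
Proof.
rewrite n_in_xI ad_xa_commute //.
by apply/ideal_opp/ideal_br/ideal_br/ideal_br.
Qed.

Lemma adu_sq_ady_adu w : I w -> [u, [u, [y, [u, w]]]] = - [u, [y, [u, [u, w]]]].
Proof.
move=> Iw; rewrite adu_sq; last by apply/ideal_br/ideal_br.
rewrite /trix (br_derivation x y [u, w]) (br_derivation x u w) Hx //.
by rewrite br0l add0r ad_x_images_commute // br0r addr0.
Qed.

Lemma ad_n_expand a :
  [n, a] = [u, [u, [y, a]]] - [u, [y, [u, a]]] *+ 2 + [y, [u, [u, a]]].
Proof.
rewrite (br_commutator u [u, y] a) (br_commutator u y a).
rewrite (br_commutator u y [u, a]) brBr opprB mulr2n opprD !addrA.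
by rewrite (ACl (1*2*4*3)).
Qed.

(* ad_n ad_u = 0 on I: applying ad_n_expand to [u, w], and ad_u to
   ad_n_expand at w, gives [n, [u, w]] = -3e and = 3e respectively,
   where e = [u, [y, [u, [u, w]]]]. *)
Lemma adn_adu w : I w -> [n, [u, w]] = 0.
Proof.
move=> Iw; set e := [u, [y, [u, [u, w]]]].
have k_neg : [n, [u, w]] = - (e *+ 3).
  rewrite ad_n_expand adu_sq_ady_adu // adu_cube // br0r addr0.
  by rewrite -/e -opprD -mulrS.
have k_pos : [n, [u, w]] = e *+ 3.
  rewrite adn_adu_commute ad_n_expand brDr brBr brMnr.
  rewrite adu_cube ?adu_sq_ady_adu //; last exact: ideal_br.
  by rewrite -/e sub0r mulNrn opprK -mulrSr.
apply: (natmul_eq0_unit two).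
by rewrite mulr2n {1}k_pos k_neg subrr.
Qed.

Lemma adn_sq w : I w -> [n, [n, w]] = 0.
Proof.
move=> Iw; rewrite [[n, w]]ad_n_expand brDr brBr brMnr.
rewrite !adn_adu; try by apply/ideal_br/ideal_br.
rewrite mul0rn subrr add0r (adu_sq Iw) (trix_inner _ Iy Iw) !brNr.
set t := [y, [y, [x, w]]].
have It : I t by apply/ideal_br/ideal_br/ideal_br.
have Is : I (- [y, [y, u]]) by apply/ideal_opp/ideal_br/ideal_br/ideal_br.
rewrite {1}n_in_xI -/(trix _ y t) (trix_sym12 Is Iy It).
by rewrite -(ad_xa_ad_xc _ Iy It) -n_in_xI -adn_adu_commute adn_adu.
Qed.

Lemma trix_cube : trix y y y = 0.
Proof.
have n0 : n = 0 by apply: HN adn_sq; apply/ideal_br/ideal_br.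
by apply: oppr_inj; rewrite -adu_sq // n0 oppr0.
Qed.

End CubicForm.

Hypothesis three : exists t : R, 3%:R * t = 1.

Lemma trix_polarized z w : I z -> I w -> trix z z w = 0.
Proof.
apply: (polarize_cube ideal_add ideal_opp trixD1 trixD2 trixD3 trix_sym12).
- by move=> a b c Ia _ Ic; apply: trix_sym13.
- exact: (fun v => natmul_eq0_unit (natr_unitM two three)).
- exact: trix_cube.
Qed.

Lemma qann_ann z : I z -> [x, z] = 0.
Proof.
move=> Iz; apply: HN (ideal_br x Iz) _ => w Iw.
by rewrite ad_xa_ad_xc // trix_polarized // oppr0.
Qed.

End StronglyNondegenerateIdeal.

End LieAlgebra.

Theorem proposition2p3 (R : comPzRingType) (L : lmodType R)
    (br : L -> L -> L) (I : L -> Prop) :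
  (exists t : R, 2%:R * t = 1) ->
  (exists t : R, 3%:R * t = 1) ->
  is_lie_bracket br ->
  is_lie_ideal br I ->
  strongly_nondegenerate br I ->
  (forall x : L, Ann br (fun _ => True) I x <-> QAnn br (fun _ => True) I x) /\
  ((forall x : L, Ann br (fun _ => True) I x -> x = 0) ->
     strongly_nondegenerate br (fun _ => True)).
Proof.
move=> two three Hb HI HN.
have qann_sub_ann x : (forall w, I w -> br x (br x w) = 0) -> forall z, I z -> br x z = 0.
  by move=> Hx z; apply: (qann_ann Hb HI HN two Hx three).
split=> [x | ann0 x _ Hx].
- split=> -[_ Hx]; split=> // z Iz; last exact: qann_sub_ann.
  by rewrite (Hx z Iz) (br0r Hb).
- by apply: ann0; split=> //; apply: qann_sub_ann => w _; apply: Hx.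
Qed.
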